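(* Let $f$ be a good piecewise expanding $C^1$ unimodal map. Suppose $(f_n)$ is a sequence of piecewise expanding $C^1$ unimodal maps with $|f_n-f|_1\to0$, and $v_n,v\in\mathcal B^0(I)$ satisfy $|v_n-v|_0\to0$ and $J(f_n,v_n)=0$ for all $n$. Then $J(f,v)=0$.
   Context: Let $I=[-1,1]$ and $c=0$. For $k\ge0$, $\mathcal B^k(I)$ is the Banach space of continuous $f:I\to\mathbb R$ that are $C^k$ on $[-1,0]$ and on $[0,1]$ with $f(1)=f(-1)$, normed by $|f|_k=\max\{|f|_{C^k[-1,0]},|f|_{C^k[0,1]}\}$, $|f|_{C^k(Q)}=\max_{0\le i\le k}\sup_Q|D^if|$. A piecewise expanding $C^1$ unimodal map is an $f\in\mathcal B^1(I)$ with $f(-1)=f(1)=-1$, $\inf_{x\in[-1,0]}Df(x)>1$, $\sup_{x\in[0,1]}Df(x)<-1$ and $f(0)\le1$. Such $f$ is good if either $c$ is not periodic, or $c$ has prime period $p\ge2$ and $|Df^{p-1}(f(c))|\min\{|Df^+(c)|,|Df^-(c)|\}>2$ ($Df^\pm(c)$ one-sided derivatives at $c$). For bounded $v:I\to\mathbb R$: if $c$ is not periodic for $f$, $J(f,v)=\sum_{i=0}^\infty \frac{v(f^i(c))}{Df^i(f(c))}$; if $c$ has prime period $p$, $J(f,v)=\sum_{i=0}^{p-1}\frac{v(f^i(c))}{Df^i(f(c))}$. *)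

From Stdlib Require Import Reals Lra ClassicalEpsilon.
From Coquelicot Require Import Coquelicot.
Open Scope R_scope.

Fixpoint iter (n : nat) (f : R -> R) (x : R) : R :=
  match n with O => x | S m => f (iter m f x) end.

Fixpoint fsum (n : nat) (g : nat -> R) : R :=
  match n with O => 0 | S m => fsum m g + g m end.

Definition inI (a b x : R) : Prop := a <= x <= b.

Definition has_deriv_within (a b : R) (g : R -> R) (x d : R) : Prop :=
  filterlim (fun y => (g y - g x) / (y - x))
    (within (fun y => inI a b y /\ y <> x) (locally x)) (locally d).

Definition cont_within (a b : R) (g : R -> R) (x : R) : Prop :=
  filterlim g (within (inI a b) (locally x)) (locally (g x)).

Definition C1_on (a b : R) (g dg : R -> R) : Prop :=
  forall x, inI a b x ->
    cont_within a b g x /\ has_deriv_within a b g x (dg x) /\ cont_within a b dg x.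

Definition in_B1 (g dl dr : R -> R) : Prop :=
  (forall x, inI (-1) 1 x -> cont_within (-1) 1 g x) /\
  C1_on (-1) 0 g dl /\ C1_on 0 1 g dr /\ g 1 = g (-1).

Definition in_B0 (v : R -> R) : Prop :=
  (forall x, inI (-1) 1 x -> cont_within (-1) 1 v x) /\ v 1 = v (-1).

(* piecewise expanding C^1 unimodal map, c = 0 *)
Definition pw_expanding_unimodal (f dl dr : R -> R) : Prop :=
  in_B1 f dl dr /\ f (-1) = -1 /\ f 1 = -1 /\
  (exists lam, lam > 1 /\ forall x, inI (-1) 0 x -> dl x >= lam) /\
  (exists lam, lam < -1 /\ forall x, inI 0 1 x -> dr x <= lam) /\
  f 0 <= 1.

(* the derivative Df, using dl on [-1,0] and dr on (0,1]; the value at c = 0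
   is never used in the formulas below except through one-sided derivatives *)
Definition pwD (dl dr : R -> R) (x : R) : R :=
  if Rle_dec x 0 then dl x else dr x.

Fixpoint Dn (i : nat) (f dl dr : R -> R) (y : R) : R :=
  match i with O => 1 | S j => Dn j f dl dr y * pwD dl dr (iter j f y) end.

Definition is_period (f : R -> R) (p : nat) : Prop :=
  (p > 0)%nat /\ iter p f 0 = 0.

Definition prime_period (f : R -> R) (p : nat) : Prop :=
  is_period f p /\ forall q, is_period f q -> (p <= q)%nat.

Definition c_periodic (f : R -> R) : Prop := exists p, is_period f p.

Definition good (f dl dr : R -> R) : Prop :=
  ~ c_periodic f \/
  exists p, (p >= 2)%nat /\ prime_period f p /\
    Rabs (Dn (p - 1) f dl dr (f 0)) * Rmin (Rabs (dr 0)) (Rabs (dl 0)) > 2.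

Definition J (f dl dr v : R -> R) : R :=
  match excluded_middle_informative (exists p, prime_period f p) with
  | left H =>
      let p := proj1_sig (constructive_indefinite_description _ H) in
      fsum p (fun i => v (iter i f 0) / Dn i f dl dr (f 0))
  | right _ =>
      Series (fun i => v (iter i f 0) / Dn i f dl dr (f 0))
  end.

Definition conv_B1 (gn dln drn : nat -> R -> R) (g dl dr : R -> R) : Prop :=
  forall eps, eps > 0 -> exists N, forall n, (n >= N)%nat ->
    (forall x, inI (-1) 0 x -> Rabs (gn n x - g x) <= eps /\ Rabs (dln n x - dl x) <= eps) /\
    (forall x, inI 0 1 x -> Rabs (gn n x - g x) <= eps /\ Rabs (drn n x - dr x) <= eps).

Definition conv_B0 (vn : nat -> R -> R) (v : R -> R) : Prop :=
  forall eps, eps > 0 -> exists N, forall n, (n >= N)%nat ->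
    forall x, inI (-1) 1 x -> Rabs (vn n x - v x) <= eps.

(* If the turning point c = 0 is not periodic for f, then for large n it does not return to
   itself under fn before a given time K either; the terms of J decay geometrically at a rate
   uniform in n (uniform expansion), so J(fn,vn) = 0 lies within a small tail of its K-th
   partial sum, which converges to the K-th partial sum of J(f,v), itself close to J(f,v).

   If c has prime period p, write S = J(f,v). The partial sums of J(fn,vn) over m whole
   periods are sums  sum_{k<m} rho_k beta_k  with beta_k -> S and rho_k = 1 / Dfn^{kp}(fn c).
   Goodness gives |Df^{p-1}(f c)| min |Df^{+-}(c)| > 2, so for large n the weights satisfy
   rho_0 = 1 and |rho_{k+1}| <= |rho_k| / G with G > 2; then
   |sum_{k<m} rho_k beta_k| >= (2 - 1/(1 - 1/G)) |S| - small, with a positive constant.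
   Since 0 = J(fn,vn) is either such a sum (c returns to itself under fn at a multiple of p)
   or within a small tail of one, S = 0. *)

From Stdlib Require Import Reals Lra Lia ClassicalEpsilon.
From Coquelicot Require Import Coquelicot.
Open Scope R_scope.

Lemma iter_add g a b x : iter (a + b) g x = iter a g (iter b g x).
Proof. induction a as [|a IH]; simpl; congruence. Qed.

Lemma iter_succ_r g n x : iter (S n) g x = iter n g (g x).
Proof. rewrite <- Nat.add_1_r, iter_add. reflexivity. Qed.

Lemma Dn_add g dlg drg a b y :
  Dn (a + b) g dlg drg y = Dn a g dlg drg y * Dn b g dlg drg (iter a g y).
Proof.
  induction b as [|b IH]; simpl.
  - rewrite Nat.add_0_r; ring.
  - rewrite Nat.add_succ_r; simpl. rewrite IH, (Nat.add_comm a b), iter_add. ring.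
Qed.

Lemma fsum_ext n h1 h2 : (forall i, (i < n)%nat -> h1 i = h2 i) -> fsum n h1 = fsum n h2.
Proof. induction n as [|n IH]; simpl; intros H; auto. rewrite IH, H; auto. Qed.

Lemma fsum_add a b h : fsum (a + b) h = fsum a h + fsum b (fun j => h (a + j)%nat).
Proof.
  induction b as [|b IH]; simpl.
  - rewrite Nat.add_0_r; ring.
  - rewrite Nat.add_succ_r; simpl. rewrite IH. ring.
Qed.

Lemma fsum_mul_blocks m p h :
  fsum (m * p) h = fsum m (fun k => fsum p (fun j => h (k * p + j)%nat)).
Proof.
  induction m as [|m IH]; simpl; auto.
  rewrite Nat.add_comm, fsum_add, IH. reflexivity.
Qed.

Lemma fsum_scal_l n c h : fsum n (fun i => c * h i) = c * fsum n h.
Proof. induction n as [|n IH]; simpl; [ring | rewrite IH; ring]. Qed.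

Lemma fsum_minus n h1 h2 : fsum n (fun i => h1 i - h2 i) = fsum n h1 - fsum n h2.
Proof. induction n as [|n IH]; simpl; [ring | rewrite IH; ring]. Qed.

Lemma fsum_le n h1 h2 : (forall i, (i < n)%nat -> h1 i <= h2 i) -> fsum n h1 <= fsum n h2.
Proof.
  induction n as [|n IH]; simpl; intros H; [lra|].
  apply Rplus_le_compat; auto.
Qed.

Lemma Rabs_fsum_le n h : Rabs (fsum n h) <= fsum n (fun i => Rabs (h i)).
Proof.
  induction n as [|n IH]; simpl; [rewrite Rabs_R0; lra|].
  eapply Rle_trans; [apply Rabs_triang | lra].
Qed.

Lemma fsum_geom r n : r <> 1 -> fsum n (fun i => r ^ i) = (1 - r ^ n) / (1 - r).
Proof.
  intros Hr. assert (1 - r <> 0) by lra.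
  induction n as [|n IH]; simpl; [field | rewrite IH; field]; auto.
Qed.

Lemma fsum_geom_le r n : 0 <= r < 1 -> fsum n (fun i => r ^ i) <= / (1 - r).
Proof.
  intros Hr. rewrite fsum_geom by lra.
  assert (0 <= r ^ n) by (apply pow_le; lra).
  unfold Rdiv. rewrite <- (Rmult_1_l (/ (1 - r))) at 2.
  apply Rmult_le_compat_r; [left; apply Rinv_0_lt_compat|]; lra.
Qed.

Lemma fsum_tail_le (a : nat -> R) C r : 0 <= r < 1 ->
  (forall i, Rabs (a i) <= C * r ^ i) ->
  forall K L, (K <= L)%nat -> Rabs (fsum L a - fsum K a) <= C * (r ^ K / (1 - r)).
Proof.
  intros Hr Ha K L HKL.
  assert (HC : 0 <= C) by (specialize (Ha O); simpl in Ha; pose proof (Rabs_pos (a O)); lra).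
  replace L with (K + (L - K))%nat by lia. rewrite fsum_add.
  replace (_ + _ - _) with (fsum (L - K) (fun j => a (K + j)%nat)) by ring.
  eapply Rle_trans; [apply Rabs_fsum_le|].
  eapply Rle_trans; [apply fsum_le with (h2 := fun j => C * r ^ K * r ^ j)|].
  - intros j _. rewrite Rmult_assoc, <- pow_add. apply Ha.
  - rewrite fsum_scal_l. unfold Rdiv. rewrite <- Rmult_assoc.
    apply Rmult_le_compat_l; [apply Rmult_le_pos; [|apply pow_le]; lra|].
    apply fsum_geom_le; lra.
Qed.

Lemma Series_tail_le (a : nat -> R) C r : 0 <= r < 1 ->
  (forall i, Rabs (a i) <= C * r ^ i) ->
  forall K, Rabs (Series a - fsum K a) <= C * (r ^ K / (1 - r)).
Proof.
  intros Hr Ha K.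
  assert (Hex : ex_series a).
  { apply (@ex_series_le R_AbsRing R_CompleteNormedModule a (fun i => C * r ^ i)); [apply Ha|].
    apply (ex_series_scal_l C (fun n => r ^ n)), ex_series_geom. rewrite Rabs_right; lra. }
  apply Series_correct, is_series_Reals in Hex.
  apply Rnot_lt_le. intro Hlt.
  destruct (Hex (Rabs (Series a - fsum K a) - C * (r ^ K / (1 - r)))) as [N HN]; [lra|].
  specialize (HN (max N K) (Nat.le_max_l _ _)). unfold R_dist in HN.
  assert (Htail := fsum_tail_le a C r Hr Ha K (S (max N K)) ltac:(lia)).
  assert (Hpart : forall n, sum_f_R0 a n = fsum (S n) a).
  { induction n as [|n IH]; simpl in *; [ring | rewrite IH; reflexivity]. }
  rewrite Hpart in HN.
  pose proof (Rabs_triang (fsum (S (max N K)) a - fsum K a) (Series a - fsum (S (max N K)) a))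
    as Htri.
  rewrite <- Rabs_Ropp in HN. replace (- _) with (Series a - fsum (S (max N K)) a) in HN by ring.
  replace (_ + _) with (Series a - fsum K a) in Htri by ring. lra.
Qed.

Lemma geom_tail_eventually_lt C r eps : 0 <= C -> 0 <= r < 1 -> 0 < eps ->
  eventually (fun K => C * (r ^ K / (1 - r)) < eps).
Proof.
  intros HC Hr He.
  destruct (pow_lt_1_zero r ltac:(rewrite Rabs_right; lra) (eps * (1 - r) / (C + 1)))
    as [N HN]; [apply Rdiv_lt_0_compat; nra|].
  exists N. intros K HK. specialize (HN K HK).
  assert (0 <= r ^ K) by (apply pow_le; lra). rewrite Rabs_right in HN by lra.
  apply Rmult_lt_compat_r with (r := C + 1) in HN; [|lra].
  replace (eps * (1 - r) / (C + 1) * (C + 1)) with (eps * (1 - r)) in HN by (field; lra).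
  apply Rmult_lt_reg_r with (1 - r); [lra|].
  replace (C * (r ^ K / (1 - r)) * (1 - r)) with (C * r ^ K) by (field; lra). nra.
Qed.

Lemma eventually_forall_lt (P : nat -> nat -> Prop) K :
  (forall k, (k < K)%nat -> eventually (P k)) ->
  eventually (fun n => forall k, (k < K)%nat -> P k n).
Proof.
  induction K as [|K IH]; intros H; [exists O; intros; lia|].
  destruct (IH (fun k Hk => H k (Nat.lt_lt_succ_r _ _ Hk))) as [N1 H1].
  destruct (H K (Nat.lt_succ_diag_r K)) as [N2 H2].
  exists (max N1 N2). intros n Hn k Hk.
  destruct (Nat.eq_dec k K) as [->|]; [apply H2 | apply H1]; lia.
Qed.

Lemma Un_cv_eventually u l eps : Un_cv u l -> 0 < eps ->
  eventually (fun n => Rabs (u n - l) < eps).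
Proof. intros H He. exact (H eps He). Qed.

Lemma eventually_Un_cv u l :
  (forall eps, 0 < eps -> eventually (fun n => Rabs (u n - l) < eps)) -> Un_cv u l.
Proof. intros H eps He. exact (H eps He). Qed.

Lemma Un_cv_eventually_ext u w l :
  eventually (fun n => u n = w n) -> Un_cv u l -> Un_cv w l.
Proof.
  intros E H. apply eventually_Un_cv. intros eps He.
  generalize (filter_and (F := eventually) _ _ E (Un_cv_eventually u l eps H He)).
  apply filter_imp. intros n [-> Hn]. exact Hn.
Qed.

Lemma Un_cv_const c : Un_cv (fun _ => c) c.
Proof. intros eps He. exists O. intros. unfold R_dist. rewrite Rminus_diag, Rabs_R0. lra. Qed.

Lemma Un_cv_div u w a b : Un_cv u a -> Un_cv w b -> b <> 0 ->
  Un_cv (fun n => u n / w n) (a / b).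
Proof.
  intros Hu Hw Hb.
  apply is_lim_seq_Reals, is_lim_seq_div'; try apply is_lim_seq_Reals; assumption.
Qed.

Lemma Un_cv_fsum K (t : nat -> nat -> R) (t0 : nat -> R) :
  (forall i, (i < K)%nat -> Un_cv (fun n => t n i) (t0 i)) ->
  Un_cv (fun n => fsum K (t n)) (fsum K t0).
Proof.
  induction K as [|K IH]; intros H; simpl; [apply Un_cv_const|].
  apply CV_plus; [apply IH; auto | apply H; lia].
Qed.

Lemma cont_within_eps a b g x : cont_within a b g x ->
  forall eps, 0 < eps -> exists del, 0 < del /\
    forall y, inI a b y -> Rabs (y - x) < del -> Rabs (g y - g x) < eps.
Proof.
  intros H eps He. apply filterlim_locally with (eps := mkposreal eps He) in H.
  destruct H as [[del Hdel] H]. exists del. split; [exact Hdel|].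
  intros y Hy Hyx. exact (H y Hyx Hy).
Qed.

Lemma has_deriv_within_interior a b g x d :
  has_deriv_within a b g x d -> a < x < b -> is_derive g x d.
Proof.
  intros H Hx. apply is_derive_Reals. intros eps He.
  apply filterlim_locally with (eps := mkposreal eps He) in H.
  destruct H as [[del Hdel] H].
  assert (Hpos : 0 < Rmin del (Rmin (x - a) (b - x))) by (repeat apply Rmin_pos; lra).
  exists (mkposreal _ Hpos). intros h Hh0 Hh. simpl in Hh.
  pose proof (Rmin_l del (Rmin (x - a) (b - x))). pose proof (Rmin_r del (Rmin (x - a) (b - x))).
  pose proof (Rmin_l (x - a) (b - x)). pose proof (Rmin_r (x - a) (b - x)).
  apply Rabs_def2 in Hh as [Hh1 Hh2].
  replace h with (x + h - x) at 2 by ring.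
  apply (H (x + h)).
  - change (Rabs (x + h - x) < del). replace (x + h - x) with h by ring. apply Rabs_def1; lra.
  - split; [unfold inI; lra | lra].
Qed.

Definition clamp (a b x : R) : R := Rmax a (Rmin b x).

Lemma clamp_in a b x : a <= b -> inI a b (clamp a b x).
Proof. intros Hab. unfold clamp, inI, Rmax, Rmin. repeat destruct Rle_dec; lra. Qed.

Lemma clamp_id a b x : inI a b x -> clamp a b x = x.
Proof. unfold clamp, inI, Rmax, Rmin. intros. repeat destruct Rle_dec; lra. Qed.

Lemma Rabs_clamp_le a b x y : Rabs (clamp a b y - clamp a b x) <= Rabs (y - x).
Proof. unfold clamp, Rmax, Rmin, Rabs. repeat destruct Rle_dec; repeat destruct Rcase_abs; lra. Qed.

(* Extending [g] by constants outside [a,b] turns one-sided continuity into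
   two-sided continuity, so that the library results about [continuity_pt] apply. *)
Lemma continuity_pt_clamp a b g x : inI a b x -> cont_within a b g x ->
  continuity_pt (fun y => g (clamp a b y)) x.
Proof.
  intros Hx Hc. apply continuity_pt_filterlim, filterlim_locally. intros eps.
  destruct (cont_within_eps _ _ _ _ Hc eps (cond_pos eps)) as [del [Hdel H]].
  exists (mkposreal del Hdel). intros y Hy. change (Rabs (y - x) < del) in Hy.
  change (Rabs (g (clamp a b y) - g (clamp a b x)) < eps).
  rewrite (clamp_id a b x Hx). apply H.
  - apply clamp_in. unfold inI in Hx; lra.
  - rewrite <- (clamp_id a b x Hx) at 1. eapply Rle_lt_trans; [apply Rabs_clamp_le | exact Hy].
Qed.

Lemma MVT_within a b g dg x y :
  (forall t, inI a b t -> cont_within a b g t /\ has_deriv_within a b g t (dg t)) ->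
  inI a b x -> inI a b y -> x <= y ->
  exists c, inI x y c /\ g y - g x = dg c * (y - x).
Proof.
  intros Hg Hx Hy Hxy.
  assert (Hsub : forall t, inI x y t -> inI a b t) by (unfold inI in *; intros; lra).
  destruct (MVT_gen (fun t => g (clamp a b t)) x y dg) as [c [Hc E]];
    rewrite Rmin_left, Rmax_right in * by lra.
  - intros t Ht. apply is_derive_ext_loc with g.
    + assert (Hpos : 0 < Rmin (t - a) (b - t)) by (unfold inI in *; apply Rmin_pos; lra).
      exists (mkposreal _ Hpos). intros s Hs. change (Rabs (s - t) < Rmin (t - a) (b - t)) in Hs.
      pose proof (Rmin_l (t - a) (b - t)). pose proof (Rmin_r (t - a) (b - t)).
      apply Rabs_def2 in Hs. rewrite clamp_id; [reflexivity | unfold inI; lra].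
    + apply has_deriv_within_interior with a b; [apply Hg|]; unfold inI in *; lra.
  - intros t Ht. apply continuity_pt_clamp; [|apply Hg]; apply Hsub, Ht.
  - exists c. split; [exact Hc|]. rewrite !clamp_id in E by auto. exact E.
Qed.

Lemma cont_within_bounded a b g : (forall x, inI a b x -> cont_within a b g x) ->
  exists M, forall x, inI a b x -> Rabs (g x) <= M.
Proof.
  intros Hg.
  destruct (@bounded_continuity R_AbsRing R_NormedModule (fun x => g (clamp a b x)) a b)
    as [M HM].
  - intros x Hx. apply (continuity_pt_filterlim (fun y => g (clamp a b y)) x), continuity_pt_clamp; auto.
  - exists M. intros x Hx. specialize (HM x Hx). rewrite clamp_id in HM by auto.
    left; exact HM.
Qed.

Lemma unif_cv_comp a b (gn : nat -> R -> R) g yn y :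
  (forall eps, 0 < eps ->
     eventually (fun n => forall x, inI a b x -> Rabs (gn n x - g x) <= eps)) ->
  cont_within a b g y -> eventually (fun n => inI a b (yn n)) -> Un_cv yn y ->
  Un_cv (fun n => gn n (yn n)) (g y).
Proof.
  intros Hu Hc Hin Hy. apply eventually_Un_cv. intros eps He.
  destruct (cont_within_eps _ _ _ _ Hc (eps / 2) ltac:(lra)) as [d [Hd Hd']].
  generalize (filter_and (F := eventually) _ _ Hin
    (filter_and (F := eventually) _ _ (Hu (eps / 4) ltac:(lra)) (Un_cv_eventually yn y d Hy Hd))).
  apply filter_imp. intros n [H1 [H2 H3]].
  specialize (H2 _ H1). specialize (Hd' _ H1 H3).
  replace (gn n (yn n) - g y) with ((gn n (yn n) - g (yn n)) + (g (yn n) - g y)) by ring.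
  eapply Rle_lt_trans; [apply Rabs_triang | lra].
Qed.

Lemma weighted_sum_lower_bound (rho beta : nat -> R) c q eps m :
  0 <= q < 1 -> 0 <= eps -> rho O = 1 -> (1 <= m)%nat ->
  (forall k, (k < m)%nat -> Rabs (rho (S k)) <= q * Rabs (rho k)) ->
  (forall k, (k < m)%nat -> Rabs (beta k - c) <= eps) ->
  (2 - / (1 - q)) * Rabs c - eps / (1 - q) <= Rabs (fsum m (fun k => rho k * beta k)).
Proof.
  intros Hq He H0 Hm Hrho Hbeta.
  set (A := fsum m (fun k => Rabs (rho k))).
  assert (Hgeom : forall k, (k < m)%nat -> Rabs (rho k) <= q ^ k).
  { induction k as [|k IH]; intros Hk; simpl; [rewrite H0, Rabs_R1; lra|].
    eapply Rle_trans; [apply Hrho; lia|]. apply Rmult_le_compat_l; [lra | apply IH; lia]. }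
  assert (HA : A <= / (1 - q)).
  { eapply Rle_trans; [apply fsum_le, Hgeom | apply fsum_geom_le; lra]. }
  assert (Hsum : 2 - A <= Rabs (fsum m rho)).
  { unfold A. replace m with (1 + (m - 1))%nat by lia. rewrite !fsum_add. simpl.
    rewrite H0, Rabs_R1, !Rplus_0_l.
    pose proof (Rabs_fsum_le (m - 1) (fun j => rho (S j))) as Hrest.
    pose proof (Rabs_triang_inv 1 (- fsum (m - 1) (fun j => rho (S j)))) as Htri.
    rewrite Rabs_R1, Rabs_Ropp in Htri.
    replace (1 - - _) with (1 + fsum (m - 1) (fun j => rho (S j))) in Htri by ring.
    lra. }
  assert (Herr : Rabs (fsum m (fun k => rho k * beta k) - c * fsum m rho) <= eps * A).
  { rewrite <- fsum_scal_l, <- fsum_minus. unfold A. rewrite <- fsum_scal_l.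
    eapply Rle_trans; [apply Rabs_fsum_le | apply fsum_le]. intros k Hk.
    replace (rho k * beta k - c * rho k) with (rho k * (beta k - c)) by ring.
    rewrite Rabs_mult, (Rmult_comm eps). apply Rmult_le_compat_l; [apply Rabs_pos | auto]. }
  pose proof (Rabs_triang_inv (c * fsum m rho) (c * fsum m rho - fsum m (fun k => rho k * beta k)))
    as Htri.
  replace (c * fsum m rho - (c * fsum m rho - _)) with (fsum m (fun k => rho k * beta k))
    in Htri by ring.
  rewrite Rabs_minus_sym, Rabs_mult in Htri.
  assert (0 <= A) by (apply Rle_trans with (Rabs (fsum m rho)); [apply Rabs_pos | apply Rabs_fsum_le]).
  assert (Rabs c * (2 - / (1 - q)) <= Rabs c * Rabs (fsum m rho))
    by (apply Rmult_le_compat_l; [apply Rabs_pos | lra]).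
  assert (eps * A <= eps * / (1 - q)) by (apply Rmult_le_compat_l; lra).
  unfold Rdiv. lra.
Qed.

Lemma Rabs_ge_of_near a b c d1 d2 : Rabs (a - b) <= d1 -> Rabs (b - c) < d2 ->
  Rabs c - (d1 + d2) <= Rabs a.
Proof.
  intros Hab Hbc.
  pose proof (Rabs_triang_inv c (c - a)) as Htri. replace (c - (c - a)) with a in Htri by ring.
  pose proof (Rabs_triang (c - b) (b - a)) as Hsum.
  replace (c - b + (b - a)) with (c - a) in Hsum by ring.
  rewrite Rabs_minus_sym in Hab, Hbc. lra.
Qed.

Lemma product_lower_bound L m G : 0 <= L -> 0 <= m -> 0 < G < L * m ->
  exists e, 0 < e /\ forall a b, L - e <= a -> m - e <= b -> G <= a * b.
Proof.
  intros HL Hm HG.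
  assert (HL' : 0 < L) by (destruct HL as [|<-]; [auto | lra]).
  assert (Hm' : 0 < m) by (destruct Hm as [|<-]; [auto | lra]).
  pose proof (Rmin_l (Rmin L m) ((L * m - G) / (L + m))).
  pose proof (Rmin_r (Rmin L m) ((L * m - G) / (L + m))).
  pose proof (Rmin_l L m). pose proof (Rmin_r L m).
  set (e := Rmin (Rmin L m) ((L * m - G) / (L + m))) in *.
  assert (He : e * (L + m) <= L * m - G).
  { apply Rle_trans with ((L * m - G) / (L + m) * (L + m));
      [apply Rmult_le_compat_r; lra | right; field; lra]. }
  exists e. split.
  { unfold e. repeat apply Rmin_pos; try apply Rdiv_lt_0_compat; lra. }
  intros a b Ha Hb.
  assert (0 <= e * e) by apply Rle_0_sqr.
  apply Rle_trans with ((L - e) * (m - e)); [lra | apply Rmult_le_compat; lra].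
Qed.

Lemma unimodal_maps_into_I g dlg drg : pw_expanding_unimodal g dlg drg ->
  forall x, inI (-1) 1 x -> inI (-1) 1 (g x).
Proof.
  intros [[_ [Hl [Hr _]]] [Hm1 [Hp1 [[l1 [Hl1 Hl1']] [[l2 [Hl2 Hl2']] H0]]]]] x Hx.
  assert (Hl' : forall t, inI (-1) 0 t ->
    cont_within (-1) 0 g t /\ has_deriv_within (-1) 0 g t (dlg t)) by (intros t Ht; apply Hl in Ht; tauto).
  assert (Hr' : forall t, inI 0 1 t ->
    cont_within 0 1 g t /\ has_deriv_within 0 1 g t (drg t)) by (intros t Ht; apply Hr in Ht; tauto).
  unfold inI in *. destruct (Rle_dec x 0).
  - destruct (MVT_within _ _ _ _ (-1) x Hl') as [c [Hc E1]]; unfold inI; try lra.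
    destruct (MVT_within _ _ _ _ x 0 Hl') as [c' [Hc' E2]]; unfold inI; try lra.
    pose proof (Hl1' c ltac:(unfold inI in *; lra)). pose proof (Hl1' c' ltac:(unfold inI in *; lra)).
    nra.
  - destruct (MVT_within _ _ _ _ 0 x Hr') as [c [Hc E1]]; unfold inI; try lra.
    destruct (MVT_within _ _ _ _ x 1 Hr') as [c' [Hc' E2]]; unfold inI; try lra.
    pose proof (Hl2' c ltac:(unfold inI in *; lra)). pose proof (Hl2' c' ltac:(unfold inI in *; lra)).
    nra.
Qed.

Lemma iter_in_I g dlg drg : pw_expanding_unimodal g dlg drg ->
  forall i x, inI (-1) 1 x -> inI (-1) 1 (iter i g x).
Proof.
  intros Hg i; induction i as [|i IH]; intros x Hx; simpl; auto.
  apply (unimodal_maps_into_I g dlg drg Hg), IH, Hx.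
Qed.

Lemma Rabs_Dn_ge g dlg drg lam y : 0 < lam ->
  (forall x, inI (-1) 1 x -> lam <= Rabs (pwD dlg drg x)) ->
  (forall i, inI (-1) 1 (iter i g y)) ->
  forall i, lam ^ i <= Rabs (Dn i g dlg drg y).
Proof.
  intros Hlam Hd Hy i. induction i as [|i IH]; simpl; [rewrite Rabs_R1; lra|].
  rewrite Rabs_mult, Rmult_comm.
  apply Rmult_le_compat; [apply pow_le; lra | lra | exact IH | apply Hd, Hy].
Qed.

(* [J g dlg drg w] sums the terms [J_term g dlg drg w 0]; other start points [y] describe
   the sum restarted at a later return of the turning point. *)
Definition J_term (g dlg drg w : R -> R) (y : R) (i : nat) : R :=
  w (iter i g y) / Dn i g dlg drg (g y).

Lemma Rabs_J_term_le g dlg drg w M lam y : 0 < lam ->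
  pw_expanding_unimodal g dlg drg ->
  (forall x, inI (-1) 1 x -> Rabs (w x) <= M) ->
  (forall x, inI (-1) 1 x -> lam <= Rabs (pwD dlg drg x)) ->
  inI (-1) 1 y -> forall i, Rabs (J_term g dlg drg w y i) <= M * (/ lam) ^ i.
Proof.
  intros Hlam Hg Hw Hd Hy i. unfold J_term.
  assert (Hgy : forall j, inI (-1) 1 (iter j g (g y))).
  { intros j. rewrite <- iter_succ_r. apply (iter_in_I _ _ _ Hg), Hy. }
  pose proof (Rabs_Dn_ge g dlg drg lam (g y) Hlam Hd Hgy i).
  assert (0 < lam ^ i) by (apply pow_lt; lra).
  unfold Rdiv. rewrite Rabs_mult, Rabs_inv, pow_inv.
  apply Rmult_le_compat; [apply Rabs_pos | left; apply Rinv_0_lt_compat; lra | |].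
  - apply Hw, (iter_in_I _ _ _ Hg), Hy.
  - apply Rinv_le_contravar; lra.
Qed.

Lemma prime_period_unique g p q : prime_period g p -> prime_period g q -> p = q.
Proof. intros [H1 H2] [H3 H4]. specialize (H2 q H3). specialize (H4 p H1). lia. Qed.

Lemma J_cases g dlg drg w :
  (exists p, prime_period g p /\ J g dlg drg w = fsum p (J_term g dlg drg w 0)) \/
  (~ c_periodic g /\ J g dlg drg w = Series (J_term g dlg drg w 0)).
Proof.
  unfold J. destruct (excluded_middle_informative _) as [H|H].
  - left. destruct (constructive_indefinite_description _ H) as [p Hp]. exists p. auto.
  - right. split; [|reflexivity]. intros [p Hp]. apply H.
    induction p as [p IH] using (well_founded_induction Nat.lt_wf_0).
    destruct (classic (exists q, (q < p)%nat /\ is_period g q)) as [[q [Hqp Hq]]|Hmin].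
    + exact (IH q Hqp Hq).
    + exists p. split; [exact Hp|]. intros q Hq. apply Nat.nlt_ge. intros Hqp. eauto.
Qed.

Lemma J_approx g dlg drg w C r : 0 <= r < 1 ->
  (forall i, Rabs (J_term g dlg drg w 0 i) <= C * r ^ i) -> forall K,
  (exists L, (1 <= L < K)%nat /\ iter L g 0 = 0 /\ J g dlg drg w = fsum L (J_term g dlg drg w 0))
  \/ Rabs (J g dlg drg w - fsum K (J_term g dlg drg w 0)) <= C * (r ^ K / (1 - r)).
Proof.
  intros Hr Ha K.
  destruct (J_cases g dlg drg w) as [[p [[[Hp1 Hp2] _] E]]|[_ E]]; rewrite E.
  - destruct (Compare_dec.lt_dec p K).
    + left. exists p. repeat split; auto; lia.
    + right. apply fsum_tail_le; auto; lia.
  - right. apply Series_tail_le; auto.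
Qed.

Lemma iter_mul_period g p : iter p g 0 = 0 -> forall m, iter (m * p) g 0 = 0.
Proof.
  intros Hp m. induction m as [|m IH]; [reflexivity|].
  simpl. rewrite iter_add, IH. exact Hp.
Qed.

Lemma iter_nonzero_before_period g p : prime_period g p ->
  forall k, (0 < k < p)%nat -> iter k g 0 <> 0.
Proof.
  intros [_ Hmin] k Hk E.
  assert (Hle : (p <= k)%nat) by (apply Hmin; split; [lia | exact E]). lia.
Qed.

Lemma iter_nonzero_off_period g p : prime_period g p ->
  forall k, (k mod p <> 0)%nat -> iter k g 0 <> 0.
Proof.
  intros Hpp k Hk. pose proof Hpp as [[Hp0 Hp] _].
  rewrite (Nat.div_mod_eq k p), Nat.add_comm, iter_add, Nat.mul_comm,
    iter_mul_period by exact Hp.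
  apply (iter_nonzero_before_period g p Hpp).
  pose proof (Nat.mod_upper_bound k p ltac:(lia)). lia.
Qed.

Lemma J_term_block g dlg drg w p k j :
  J_term g dlg drg w 0 (k * p + j) =
  / Dn (k * p) g dlg drg (g 0) * J_term g dlg drg w (iter (k * p) g 0) j.
Proof.
  unfold J_term. rewrite Dn_add, (Nat.add_comm (k * p) j), iter_add, <- iter_succ_r.
  simpl. unfold Rdiv. rewrite Rinv_mult. ring.
Qed.

Lemma fsum_J_term_blocks g dlg drg w p m :
  fsum (m * p) (J_term g dlg drg w 0) =
  fsum m (fun k => / Dn (k * p) g dlg drg (g 0) * fsum p (J_term g dlg drg w (iter (k * p) g 0))).
Proof.
  rewrite fsum_mul_blocks. apply fsum_ext. intros k _.
  rewrite <- fsum_scal_l. apply fsum_ext. intros j _. apply J_term_block.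
Qed.

Lemma Dn_next_block g dlg drg p k :
  Dn (S k * p) g dlg drg (g 0) =
  Dn (k * p) g dlg drg (g 0) * Dn p g dlg drg (g (iter (k * p) g 0)).
Proof.
  replace (S k * p)%nat with (k * p + p)%nat by lia.
  rewrite Dn_add, <- iter_succ_r. reflexivity.
Qed.

Lemma zero_in_I : inI (-1) 1 0.
Proof. unfold inI; lra. Qed.

Section Perturbation.

Variables (f dl dr : R -> R) (fn dln drn : nat -> R -> R) (v : R -> R) (vn : nat -> R -> R).
Hypothesis Hf : pw_expanding_unimodal f dl dr.
Hypothesis Hfn : forall n, pw_expanding_unimodal (fn n) (dln n) (drn n).
Hypothesis Hconv_f : conv_B1 fn dln drn f dl dr.
Hypothesis Hv : in_B0 v.
Hypothesis Hconv_v : conv_B0 vn v.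

Lemma fn_unif_cv eps : 0 < eps ->
  eventually (fun n => forall x, inI (-1) 1 x -> Rabs (fn n x - f x) <= eps).
Proof.
  intros He. destruct (Hconv_f eps He) as [N HN]. exists N. intros n Hn x Hx.
  destruct (HN n Hn) as [Hl Hr]. unfold inI in Hx. destruct (Rle_dec x 0).
  - apply Hl; unfold inI; lra.
  - apply Hr; unfold inI; lra.
Qed.

Lemma dln_unif_cv eps : 0 < eps ->
  eventually (fun n => forall x, inI (-1) 0 x -> Rabs (dln n x - dl x) <= eps).
Proof.
  intros He. destruct (Hconv_f eps He) as [N HN]. exists N. intros n Hn x Hx. apply HN; auto.
Qed.

Lemma drn_unif_cv eps : 0 < eps ->
  eventually (fun n => forall x, inI 0 1 x -> Rabs (drn n x - dr x) <= eps).
Proof.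
  intros He. destruct (Hconv_f eps He) as [N HN]. exists N. intros n Hn x Hx. apply HN; auto.
Qed.

Lemma iter_cv zn z : Un_cv zn z -> (forall n, inI (-1) 1 (zn n)) -> inI (-1) 1 z ->
  forall i, Un_cv (fun n => iter i (fn n) (zn n)) (iter i f z).
Proof.
  intros Hz Hzn Hzi i. induction i as [|i IH]; simpl; [exact Hz|].
  apply unif_cv_comp with (-1) 1; [apply fn_unif_cv | | | exact IH].
  - apply (proj1 (proj1 Hf)), (iter_in_I _ _ _ Hf), Hzi.
  - apply filter_forall. intros n. apply (iter_in_I _ _ _ (Hfn n)), Hzn.
Qed.

Lemma pwD_cv yn y : Un_cv yn y -> (forall n, inI (-1) 1 (yn n)) -> inI (-1) 1 y -> y <> 0 ->
  Un_cv (fun n => pwD (dln n) (drn n) (yn n)) (pwD dl dr y).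
Proof.
  intros Hy Hyn Hyi Hy0.
  destruct Hf as [[_ [Hl [Hr _]]] _].
  pose proof (Un_cv_eventually yn y (Rabs y) Hy (Rabs_pos_lt y Hy0)) as Hside.
  unfold pwD at 2. destruct (Rle_dec y 0) as [Hle|Hgt].
  - rewrite Rabs_left in Hside by lra.
    apply Un_cv_eventually_ext with (fun n => dln n (yn n)).
    + generalize Hside. apply filter_imp. intros n Hn. apply Rabs_def2 in Hn.
      unfold pwD. destruct Rle_dec; [reflexivity | lra].
    + destruct (Hl y) as [_ [_ Hcont]]; [unfold inI in *; lra|].
      apply unif_cv_comp with (-1) 0; [apply dln_unif_cv | exact Hcont | | exact Hy].
      generalize Hside. apply filter_imp. intros n Hn. apply Rabs_def2 in Hn.
      specialize (Hyn n). unfold inI in *; lra.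
  - rewrite Rabs_right in Hside by lra.
    apply Un_cv_eventually_ext with (fun n => drn n (yn n)).
    + generalize Hside. apply filter_imp. intros n Hn. apply Rabs_def2 in Hn.
      unfold pwD. destruct Rle_dec; [lra | reflexivity].
    + destruct (Hr y) as [_ [_ Hcont]]; [unfold inI in *; lra|].
      apply unif_cv_comp with 0 1; [apply drn_unif_cv | exact Hcont | | exact Hy].
      generalize Hside. apply filter_imp. intros n Hn. apply Rabs_def2 in Hn.
      specialize (Hyn n). unfold inI in *; lra.
Qed.

Lemma Dn_cv zn z : Un_cv zn z -> (forall n, inI (-1) 1 (zn n)) -> inI (-1) 1 z ->
  forall j, (forall k, (k < j)%nat -> iter k f z <> 0) ->
  Un_cv (fun n => Dn j (fn n) (dln n) (drn n) (zn n)) (Dn j f dl dr z).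
Proof.
  intros Hz Hzn Hzi j. induction j as [|j IH]; intros Hk; simpl; [apply Un_cv_const|].
  apply CV_mult; [apply IH; auto|].
  apply pwD_cv; [apply iter_cv; auto | | apply (iter_in_I _ _ _ Hf), Hzi | apply Hk; lia].
  intros n. apply (iter_in_I _ _ _ (Hfn n)), Hzn.
Qed.

Lemma uniform_expansion : exists lam, 1 < lam /\
  (forall x, inI (-1) 1 x -> lam <= Rabs (pwD dl dr x)) /\
  eventually (fun n => forall x, inI (-1) 1 x -> lam <= Rabs (pwD (dln n) (drn n) x)).
Proof.
  destruct Hf as [_ [_ [_ [[l1 [Hl1 Hdl]] [[l2 [Hl2 Hdr]] _]]]]].
  set (lam0 := Rmin l1 (- l2)).
  assert (Hlam0 : 1 < lam0) by (apply Rmin_glb_lt; lra).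
  assert (Hl1' : lam0 <= l1) by apply Rmin_l.
  assert (Hl2' : lam0 <= - l2) by apply Rmin_r.
  exists ((1 + lam0) / 2). split; [lra | split].
  - intros x Hx. unfold pwD, inI in *. destruct Rle_dec.
    + specialize (Hdl x ltac:(unfold inI; lra)). rewrite Rabs_right; lra.
    + specialize (Hdr x ltac:(unfold inI; lra)). rewrite Rabs_left; lra.
  - generalize (filter_and (F := eventually) _ _
      (dln_unif_cv ((lam0 - 1) / 2) ltac:(lra)) (drn_unif_cv ((lam0 - 1) / 2) ltac:(lra))).
    apply filter_imp. intros n [El Er] x Hx. unfold pwD, inI in *. destruct Rle_dec.
    + specialize (Hdl x ltac:(unfold inI; lra)). specialize (El x ltac:(unfold inI; lra)).
      apply Rabs_le_between' in El. rewrite Rabs_right; lra.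
    + specialize (Hdr x ltac:(unfold inI; lra)). specialize (Er x ltac:(unfold inI; lra)).
      apply Rabs_le_between' in Er. rewrite Rabs_left; lra.
Qed.

Lemma Dn_nonzero j y : inI (-1) 1 y -> Dn j f dl dr y <> 0.
Proof.
  intros Hy E. destruct uniform_expansion as [lam [Hlam [Hd _]]].
  pose proof (Rabs_Dn_ge f dl dr lam y ltac:(lra) Hd (fun i => iter_in_I _ _ _ Hf i y Hy) j)
    as Hge.
  pose proof (pow_lt lam j ltac:(lra)). rewrite E, Rabs_R0 in Hge. lra.
Qed.

Lemma J_term_cv zn z j : Un_cv zn z -> (forall n, inI (-1) 1 (zn n)) -> inI (-1) 1 z ->
  (forall k, (k < j)%nat -> iter k f (f z) <> 0) ->
  Un_cv (fun n => J_term (fn n) (dln n) (drn n) (vn n) (zn n) j) (J_term f dl dr v z j).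
Proof.
  intros Hz Hzn Hzi Hk.
  pose proof (unimodal_maps_into_I _ _ _ Hf z Hzi) as Hfz.
  pose proof (fun n => unimodal_maps_into_I _ _ _ (Hfn n) _ (Hzn n)) as Hfzn.
  unfold J_term. apply Un_cv_div.
  - apply unif_cv_comp with (-1) 1.
    + intros eps He. exact (Hconv_v eps He).
    + apply (proj1 Hv), (iter_in_I _ _ _ Hf), Hzi.
    + apply filter_forall. intros n. apply (iter_in_I _ _ _ (Hfn n)), Hzn.
    + apply iter_cv; auto.
  - apply Dn_cv; auto. exact (iter_cv zn z Hz Hzn Hzi 1).
  - apply Dn_nonzero, Hfz.
Qed.

Lemma uniform_geometric_bound : exists M r, 0 <= M /\ 0 <= r < 1 /\
  (forall i, Rabs (J_term f dl dr v 0 i) <= M * r ^ i) /\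
  eventually (fun n => forall i, Rabs (J_term (fn n) (dln n) (drn n) (vn n) 0 i) <= M * r ^ i).
Proof.
  destruct uniform_expansion as [lam [Hlam [Hd Hdn]]].
  destruct (cont_within_bounded (-1) 1 v (proj1 Hv)) as [M0 HM0].
  set (M := Rabs M0 + 1).
  assert (Hvb : forall x, inI (-1) 1 x -> Rabs (v x) <= M).
  { intros x Hx. pose proof (HM0 x Hx). pose proof (Rle_abs M0). unfold M. lra. }
  exists M, (/ lam). split; [pose proof (Rabs_pos M0); unfold M; lra|].
  split; [split; [left; apply Rinv_0_lt_compat | rewrite <- Rinv_1; apply Rinv_lt_contravar]; lra|].
  split; [apply Rabs_J_term_le; auto; [lra | apply zero_in_I]|].
  generalize (filter_and (F := eventually) _ _ Hdn (Hconv_v 1 Rlt_0_1)).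
  apply filter_imp. intros n [Hdn' Hvn] i.
  apply Rabs_J_term_le; auto; [lra | | apply zero_in_I].
  intros x Hx. specialize (Hvn x Hx). pose proof (HM0 x Hx). pose proof (Rle_abs M0). unfold M.
  replace (vn n x) with ((vn n x - v x) + v x) by ring.
  pose proof (Rabs_triang (vn n x - v x) (v x)). lra.
Qed.

Lemma eventually_no_early_return K : eventually (fun n =>
  forall k, (k < K)%nat -> iter k f 0 <> 0 -> iter k (fn n) 0 <> 0).
Proof.
  apply eventually_forall_lt. intros k _.
  destruct (Req_dec (iter k f 0) 0) as [E|Hk].
  - apply filter_forall. intros n Hk. contradiction.
  - pose proof (iter_cv (fun _ => 0) 0 (Un_cv_const 0) (fun _ => zero_in_I) zero_in_I k) as Hcv.
    generalize (Un_cv_eventually _ _ _ Hcv (Rabs_pos_lt _ Hk)). apply filter_imp.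
    intros n Hn _ E. rewrite E, Rminus_0_l, Rabs_Ropp in Hn. lra.
Qed.

Lemma pwD_near_turning_point yn : Un_cv yn 0 -> (forall n, inI (-1) 1 (yn n)) ->
  forall eps, 0 < eps ->
  eventually (fun n => Rmin (Rabs (dr 0)) (Rabs (dl 0)) - eps <= Rabs (pwD (dln n) (drn n) (yn n))).
Proof.
  intros Hy Hyn eps He.
  destruct Hf as [[_ [Hl [Hr _]]] _].
  destruct (Hl 0) as [_ [_ Hcl]]; [unfold inI; lra|].
  destruct (Hr 0) as [_ [_ Hcr]]; [unfold inI; lra|].
  destruct (cont_within_eps _ _ _ _ Hcl (eps / 2) ltac:(lra)) as [d1 [Hd1 H1]].
  destruct (cont_within_eps _ _ _ _ Hcr (eps / 2) ltac:(lra)) as [d2 [Hd2 H2]].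
  generalize (filter_and (F := eventually) _ _
    (Un_cv_eventually yn 0 (Rmin d1 d2) Hy ltac:(apply Rmin_pos; lra))
    (filter_and (F := eventually) _ _
       (dln_unif_cv (eps / 2) ltac:(lra)) (drn_unif_cv (eps / 2) ltac:(lra)))).
  apply filter_imp. intros n [Hnear [El Er]]. rewrite Rminus_0_r in Hnear.
  pose proof (Rmin_l d1 d2). pose proof (Rmin_r d1 d2).
  pose proof (Rmin_l (Rabs (dr 0)) (Rabs (dl 0))). pose proof (Rmin_r (Rabs (dr 0)) (Rabs (dl 0))).
  specialize (Hyn n). apply Rabs_def2 in Hnear. unfold pwD, inI in *. destruct Rle_dec.
  - specialize (El (yn n) ltac:(lra)).
    specialize (H1 (yn n) ltac:(lra) ltac:(rewrite Rminus_0_r; apply Rabs_def1; lra)).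
    pose proof (Rabs_ge_of_near _ _ _ _ _ El H1). lra.
  - specialize (Er (yn n) ltac:(lra)).
    specialize (H2 (yn n) ltac:(lra) ltac:(rewrite Rminus_0_r; apply Rabs_def1; lra)).
    pose proof (Rabs_ge_of_near _ _ _ _ _ Er H2). lra.
Qed.

Lemma Dn_period_lower_bound p G zn : prime_period f p -> 0 < G ->
  G < Rabs (Dn (p - 1) f dl dr (f 0)) * Rmin (Rabs (dr 0)) (Rabs (dl 0)) ->
  Un_cv zn 0 -> (forall n, inI (-1) 1 (zn n)) ->
  eventually (fun n => G <= Rabs (Dn p (fn n) (dln n) (drn n) (fn n (zn n)))).
Proof.
  intros Hpp HG0 HG Hz Hzn. pose proof Hpp as [[Hp0 Hp] _].
  set (Lam := Dn (p - 1) f dl dr (f 0)) in HG.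
  destruct (product_lower_bound (Rabs Lam) (Rmin (Rabs (dr 0)) (Rabs (dl 0))) G)
    as [e [He Hprod]]; [apply Rabs_pos | apply Rmin_glb; apply Rabs_pos | lra |].
  pose proof (iter_cv zn 0 Hz Hzn zero_in_I 1) as Hfz.
  pose proof (fun n => unimodal_maps_into_I _ _ _ (Hfn n) _ (Hzn n)) as HfzI.
  pose proof (unimodal_maps_into_I _ _ _ Hf _ zero_in_I) as Hf0.
  assert (HD : Un_cv (fun n => Dn (p - 1) (fn n) (dln n) (drn n) (fn n (zn n))) Lam).
  { apply Dn_cv; auto. intros k Hk. rewrite <- iter_succ_r.
    apply (iter_nonzero_before_period f p Hpp). lia. }
  assert (Hy : Un_cv (fun n => iter (p - 1) (fn n) (fn n (zn n))) 0).
  { replace 0 with (iter (p - 1) f (f 0)); [apply iter_cv; auto|].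
    rewrite <- iter_succ_r. replace (S (p - 1)) with p by lia. exact Hp. }
  generalize (filter_and (F := eventually) _ _ (Un_cv_eventually _ _ e HD He)
    (pwD_near_turning_point _ Hy (fun n => iter_in_I _ _ _ (Hfn n) _ _ (HfzI n)) e He)).
  apply filter_imp. intros n [HDn Hpw].
  replace p with (S (p - 1)) by lia. simpl Dn. rewrite Rabs_mult. apply Hprod; [|exact Hpw].
  pose proof (Rabs_triang_inv Lam (Lam - Dn (p - 1) (fn n) (dln n) (drn n) (fn n (zn n))))
    as Htri.
  replace (Lam - (Lam - _)) with (Dn (p - 1) (fn n) (dln n) (drn n) (fn n (zn n))) in Htri
    by ring.
  rewrite Rabs_minus_sym in HDn. lra.
Qed.

Lemma iter_period_multiple_cv p m : iter p f 0 = 0 ->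
  Un_cv (fun n => iter (m * p) (fn n) 0) 0.
Proof.
  intros Hp.
  pose proof (iter_cv (fun _ => 0) 0 (Un_cv_const 0) (fun _ => zero_in_I) zero_in_I (m * p)) as Hz.
  rewrite (iter_mul_period f p Hp m) in Hz. exact Hz.
Qed.

Lemma block_sum_cv p m : prime_period f p ->
  Un_cv (fun n => fsum p (J_term (fn n) (dln n) (drn n) (vn n) (iter (m * p) (fn n) 0)))
        (fsum p (J_term f dl dr v 0)).
Proof.
  intros Hpp.
  apply Un_cv_fsum. intros j Hj. apply J_term_cv; auto using zero_in_I.
  - apply iter_period_multiple_cv, Hpp.
  - intros n. apply (iter_in_I _ _ _ (Hfn n)), zero_in_I.
  - intros k Hk. rewrite <- iter_succ_r. apply (iter_nonzero_before_period f p Hpp). lia.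
Qed.

(* Near a good periodic orbit, the partial sums of [J (fn n)] over whole periods are weighted
   sums of near-copies of [J f], with weights decaying by a factor [/ G] per period. *)
Lemma periodic_block_sums_lower_bound p G B eps : prime_period f p ->
  1 < G < Rabs (Dn (p - 1) f dl dr (f 0)) * Rmin (Rabs (dr 0)) (Rabs (dl 0)) -> 0 < eps ->
  eventually (fun n => forall m, (1 <= m <= B)%nat ->
    (2 - / (1 - / G)) * Rabs (fsum p (J_term f dl dr v 0)) - eps <=
    Rabs (fsum (m * p) (J_term (fn n) (dln n) (drn n) (vn n) 0))).
Proof.
  intros Hpp HG He.
  set (q := / G). set (S0 := fsum p (J_term f dl dr v 0)).
  assert (Hq : 0 <= q < 1).
  { unfold q. split; [left; apply Rinv_0_lt_compat; lra|].
    rewrite <- Rinv_1. apply Rinv_lt_contravar; lra. }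
  assert (Hblocks : eventually (fun n => forall k, (k < B)%nat ->
    Rabs (fsum p (J_term (fn n) (dln n) (drn n) (vn n) (iter (k * p) (fn n) 0)) - S0)
      < eps * (1 - q))).
  { apply eventually_forall_lt. intros k _.
    apply Un_cv_eventually; [apply block_sum_cv, Hpp | apply Rmult_lt_0_compat; lra]. }
  assert (Hcontract : eventually (fun n => forall k, (k < B)%nat ->
    G <= Rabs (Dn p (fn n) (dln n) (drn n) (fn n (iter (k * p) (fn n) 0))))).
  { apply eventually_forall_lt. intros k _.
    apply Dn_period_lower_bound; [exact Hpp | lra | lra | |].
    - apply iter_period_multiple_cv, Hpp.
    - intros n. apply (iter_in_I _ _ _ (Hfn n)), zero_in_I. }
  generalize (filter_and (F := eventually) _ _ Hblocks Hcontract).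
  apply filter_imp. intros n [Hb Hc] m Hm.
  rewrite fsum_J_term_blocks.
  replace ((2 - / (1 - q)) * Rabs S0 - eps)
    with ((2 - / (1 - q)) * Rabs S0 - eps * (1 - q) / (1 - q)) by (field; lra).
  apply weighted_sum_lower_bound; [exact Hq | nra | simpl; apply Rinv_1 | lia | |].
  - intros k Hk. specialize (Hc k ltac:(lia)).
    rewrite Dn_next_block, Rinv_mult, !Rabs_mult, (Rmult_comm q).
    apply Rmult_le_compat_l; [apply Rabs_pos|]. rewrite Rabs_inv.
    apply Rinv_le_contravar; lra.
  - intros k Hk. left. apply Hb. lia.
Qed.

Lemma J_zero_of_nonperiodic : ~ c_periodic f ->
  (forall n, J (fn n) (dln n) (drn n) (vn n) = 0) -> J f dl dr v = 0.
Proof.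
  intros Hnp HJ.
  destruct uniform_geometric_bound as [M [r [HM [Hr [Hbf Hbn]]]]].
  assert (Hnz : forall k, (1 <= k)%nat -> iter k f 0 <> 0)
    by (intros k Hk E; apply Hnp; exists k; split; [lia | exact E]).
  assert (Htail : forall K,
    Rabs (J f dl dr v - fsum K (J_term f dl dr v 0)) <= M * (r ^ K / (1 - r))).
  { intros K. destruct (J_approx f dl dr v M r Hr Hbf K) as [[L [HL [HL0 _]]]|H]; [|exact H].
    exfalso. apply (Hnz L); [lia | exact HL0]. }
  assert (Hterms : forall K, Un_cv (fun n => fsum K (J_term (fn n) (dln n) (drn n) (vn n) 0))
                                   (fsum K (J_term f dl dr v 0))).
  { intros K. apply Un_cv_fsum. intros i _.
    apply J_term_cv; auto using Un_cv_const, zero_in_I.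
    intros k _. rewrite <- iter_succ_r. apply Hnz. lia. }
  apply Rabs_eq_0, Rle_antisym; [|apply Rabs_pos].
  apply Rle_plus_epsilon. intros eps He. rewrite Rplus_0_l.
  destruct (geom_tail_eventually_lt M r (eps / 3) HM Hr ltac:(lra)) as [K HK].
  specialize (HK K (le_n K)).
  destruct (filter_and (F := eventually) _ _ (eventually_no_early_return K)
    (filter_and (F := eventually) _ _
       (Un_cv_eventually _ _ (eps / 3) (Hterms K) ltac:(lra)) Hbn)) as [N HN].
  destruct (HN N (le_n N)) as [Hret [Hclose Hgeom]].
  destruct (J_approx _ _ _ _ M r Hr Hgeom K) as [[L [HL [HL0 _]]]|HJN].
  - exfalso. apply (Hret L); [lia | apply Hnz; lia | exact HL0].
  - rewrite HJ in HJN. specialize (Htail K).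
    apply Rabs_le_between in HJN, Htail. apply Rabs_def2 in Hclose.
    apply Rabs_le_between. lra.
Qed.

Lemma J_zero_of_good_period p : prime_period f p ->
  2 < Rabs (Dn (p - 1) f dl dr (f 0)) * Rmin (Rabs (dr 0)) (Rabs (dl 0)) ->
  (forall n, J (fn n) (dln n) (drn n) (vn n) = 0) -> J f dl dr v = 0.
Proof.
  intros Hpp Hgood HJ.
  set (S0 := fsum p (J_term f dl dr v 0)).
  assert (EJ : J f dl dr v = S0).
  { destruct (J_cases f dl dr v) as [[p' [Hp' E]]|[Hnp _]].
    - rewrite (prime_period_unique _ _ _ Hp' Hpp) in E. exact E.
    - exfalso. apply Hnp. exists p. apply Hpp. }
  set (G := (Rabs (Dn (p - 1) f dl dr (f 0)) * Rmin (Rabs (dr 0)) (Rabs (dl 0)) + 2) / 2).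
  set (kappa := 2 - / (1 - / G)).
  assert (Hkappa : 0 < kappa).
  { assert (HG : / G < / 2) by (apply Rinv_lt_contravar; unfold G; lra).
    assert (HG' : / (1 - / G) < / (1 - / 2))
      by (apply Rinv_lt_contravar; [apply Rmult_lt_0_compat|]; lra).
    unfold kappa. replace (/ (1 - / 2)) with 2 in HG' by field. lra. }
  destruct uniform_geometric_bound as [M [r [HM [Hr [_ Hbn]]]]].
  rewrite EJ. apply Rabs_eq_0, Rle_antisym; [|apply Rabs_pos].
  apply Rmult_le_reg_l with kappa; [exact Hkappa|]. rewrite Rmult_0_r.
  apply Rle_plus_epsilon. intros eps He. rewrite Rplus_0_l.
  destruct (geom_tail_eventually_lt M r (eps / 2) HM Hr ltac:(lra)) as [K HK].
  pose proof Hpp as [[Hp0 _] _].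
  destruct (filter_and (F := eventually) _ _ (eventually_no_early_return (S K * p))
    (filter_and (F := eventually) _ _ Hbn
       (periodic_block_sums_lower_bound p G (S K) (eps / 2) Hpp
          ltac:(unfold G; lra) ltac:(lra)))) as [N HN].
  destruct (HN N (le_n N)) as [Hret [Hgeom Hblocks]].
  destruct (J_approx _ _ _ _ M r Hr Hgeom (S K * p)) as [[L [HL [HL0 EL]]]|Htail].
  - assert (HLp : (L mod p = 0)%nat).
    { destruct (Nat.eq_dec (L mod p) 0) as [|Hne]; [assumption|]. exfalso.
      apply (Hret L); [lia | apply (iter_nonzero_off_period f p Hpp), Hne | exact HL0]. }
    pose proof (Nat.div_mod_eq L p) as HLdiv. rewrite HLp, Nat.add_0_r, Nat.mul_comm in HLdiv.
    specialize (Hblocks (L / p)%nat ltac:(nia)).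
    rewrite <- HLdiv, <- EL, HJ, Rabs_R0 in Hblocks. fold S0 kappa in Hblocks. lra.
  - rewrite HJ, Rminus_0_l, Rabs_Ropp in Htail.
    specialize (Hblocks (S K) ltac:(lia)). specialize (HK (S K * p)%nat ltac:(nia)).
    fold S0 kappa in Hblocks. lra.
Qed.

End Perturbation.

Theorem corollary3p1
  (f dl dr : R -> R) (fn dln drn : nat -> R -> R) (v : R -> R) (vn : nat -> R -> R) :
  pw_expanding_unimodal f dl dr ->
  good f dl dr ->
  (forall n, pw_expanding_unimodal (fn n) (dln n) (drn n)) ->
  conv_B1 fn dln drn f dl dr ->
  in_B0 v -> (forall n, in_B0 (vn n)) ->
  conv_B0 vn v ->
  (forall n, J (fn n) (dln n) (drn n) (vn n) = 0) ->
  J f dl dr v = 0.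
Proof.
  intros Hf Hgood Hfn Hconv_f Hv _ Hconv_v HJ.
  destruct Hgood as [Hnp | [p [_ [Hpp Hexp]]]].
  - exact (J_zero_of_nonperiodic f dl dr fn dln drn v vn Hf Hfn Hconv_f Hv Hconv_v Hnp HJ).
  - exact (J_zero_of_good_period f dl dr fn dln drn v vn Hf Hfn Hconv_f Hv Hconv_v p Hpp Hexp HJ).
Qed.
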